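(* Fix $\lambda\in[0,1]$. Suppose $(q_{i,j}^{(k)})_{i\ne j,\,k=\pm1}$ are real numbers with $q_{i,j}^{(k)}\in(0,1)$ for all indices, satisfying $$q_{i,j}^{(k)}=\lambda\Big[p_{i,j}^{(k)}+\sum_{m\neq i,j}p_{i,m}^{(k)}q_{m,j}^{(k)}+\sum_{m\neq i}p_{i,m}^{(-k)}q_{m,i}^{(-k)}q_{i,j}^{(k)}\Big]\quad\text{for all } i\ne j,\ k.$$ Then $q_{i,j}^{(k)}=R_{i,j}^{(k)}(\lambda)$ for all $i\neq j$, $k$.
   Context: Fix an integer $N\ge 3$. Let $\mathcal G_N$ be the groupoid with object set $\{1,\dots,N\}$ generated by arrows $A_{i,j}^{(k)}$, $i\neq j\in\{1,\dots,N\}$, $k\in\{-1,1\}$, with source $i$ and target $j$, subject to the relations $A_{i,j}^{(k)}A_{j,\ell}^{(k)}=A_{i,\ell}^{(k)}$ for all $i,j,\ell$, $k$, with the convention $A_{i,i}^{(k)}:=e_i$ (unit at object $i$). Let $\mathcal A$ be its arrow set. Let $\{W_n\}_{n\ge0}$ be the Markov chain on $\mathcal A$ with $P(W_{n+1}=y\mid W_n=x)=p_{i,j}^{(k)}$ if $x^{-1}y=A_{i,j}^{(k)}$ with $i\ne j$ and $0$ otherwise, where $p_{i,j}^{(k)}\in(0,1)$ and $\sum_{j\ne i}\sum_{k=\pm1}p_{i,j}^{(k)}=1$ for each $i$; $P_x,E_x$ denote law and expectation with $W_0=x$. For $x\in\mathcal A$ let $T(0,x)=\inf\{n\ge0:W_n=W_0x\}$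 (possibly $\infty$), and define $R_{i,j}^{(k)}(\lambda)=E_{e_i}[\lambda^{T(0,A_{i,j}^{(k)})}]=\sum_{n\ge0}P_{e_i}(T(0,A_{i,j}^{(k)})=n)\lambda^n$. *)

From Stdlib Require Import Reals List Arith Bool.
From Coquelicot Require Import Coquelicot.
Import ListNotations.
Open Scope R_scope.

(* Objects of the groupoid G_N: 0, ..., N-1 (relabelling of 1..N).
   Signs k in {-1,+1}: true = +1, false = -1; -k is negb k. *)

Definition fsum (n : nat) (f : nat -> R) : R :=
  fold_right Rplus 0 (map f (seq 0 n)).

(* Concrete model of the arrows of G_N with source s (reduced words):
   an arrow with source s is the reduced word
     A_{s,j1}^{(k1)} A_{j1,j2}^{(k2)} ... A_{j(m-1),jm}^{(km)}
   with consecutive signs alternating and consecutive objects distinct.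
   It is stored REVERSED as the list [(km,jm); ...; (k1,j1)].
   The empty list is the unit e_s. *)
Definition word := list (bool * nat).

Definition wend (s : nat) (w : word) : nat :=
  match w with [] => s | (_, j) :: _ => j end.

(* right multiplication  x |-> x * A_{t(x),j}^{(k)}  (with j <> t(x)) on
   reduced words, using A^{(k)}_{a,b} A^{(k)}_{b,c} = A^{(k)}_{a,c}
   and A^{(k)}_{a,a} = e_a. *)
Definition wstep (s : nat) (w : word) (k : bool) (j : nat) : word :=
  match w with
  | [] => [(k, j)]
  | (k', j') :: w' =>
      if Bool.eqb k' k then
        (if Nat.eqb (wend s w') j then w' else (k, j) :: w')
      else (k, j) :: w
  end.

Definition is_gen (w : word) (k : bool) (j : nat) : bool :=
  match w with
  | [(k', j')] => Bool.eqb k k' && Nat.eqb j j'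
  | _ => false
  end.

(* hitP N p s k j n w : probability, for the walk {W_n} started at the
   arrow w (source s) with transition probabilities p, that the first
   time n' >= 0 with W_{n'} = A_{s,j}^{(k)} equals n.  Defined by the
   first-step decomposition of the path-space law of the Markov chain:
   from an arrow with target i, the step by A_{i,j'}^{(k')} (j' <> i)
   has probability p i j' k'. *)
Fixpoint hitP (N : nat) (p : nat -> nat -> bool -> R) (s : nat) (k : bool)
    (j : nat) (n : nat) (w : word) : R :=
  match n with
  | O => if is_gen w k j then 1 else 0
  | S n' =>
      if is_gen w k j then 0 else
      let i := wend s w in
      fsum N (fun j' =>
        if Nat.eqb j' i then 0 else
        p i j' true  * hitP N p s k j n' (wstep s w true j') +
        p i j' false * hitP N p s k j n' (wstep s w false j'))
  end.

Definition hitting_prob (N : nat) (p : nat -> nat -> bool -> R)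
    (i j : nat) (k : bool) (n : nat) : R :=
  hitP N p i k j n [].

Definition R_gen_is (N : nat) (p : nat -> nat -> bool -> R)
    (i j : nat) (k : bool) (lam r : R) : Prop :=
  is_series (fun n => hitting_prob N p i j k n * lam ^ n) r.

Definition transition_probs (N : nat) (p : nat -> nat -> bool -> R) : Prop :=
  (forall i j k, (i < N)%nat -> (j < N)%nat -> i <> j ->
     0 < p i j k < 1) /\
  (forall i, (i < N)%nat ->
     fsum N (fun j => if Nat.eqb j i then 0 else p i j true + p i j false) = 1).

(* From an arrow w with source s, the walk still has to travel the reduced word
   w^{-1} A_{s,j}^{(k)}; let V(w) be the product of the q's over its letters.  A step of
   the walk left-multiplies that word by one generator, so the fixed-point equation
   makes V lam-harmonic off the target, while V = 1 on the target.  Hence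
   sum_{t <= n} P(T = t) lam^t + E[lam^n V(W_n); T > n] = V(e_s) = q_{s,j}^{(k)}.
   The remainder vanishes: the product U of the (1 + q)/2 satisfies lam P U + c V <= U
   for some c > 0 (this is where q < 1 and the positivity of p enter), which gives
   c n E[lam^n V(W_n); T > n] <= U(e_s). *)

From Stdlib Require Import Reals List Arith Bool Lra Lia.
From Coquelicot Require Import Coquelicot.
Import ListNotations.
Open Scope R_scope.

Lemma fold_right_Rplus_init (l : list R) (x : R) :
  fold_right Rplus x l = fold_right Rplus 0 l + x.
Proof. induction l as [|y l IH]; simpl; [lra | rewrite IH; lra]. Qed.

Lemma fsum_S n f : fsum (S n) f = fsum n f + f n.
Proof.
  unfold fsum. rewrite seq_S, map_app, fold_right_app. simpl.
  rewrite fold_right_Rplus_init. lra.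
Qed.

Lemma fsum_ext n f g : (forall m, (m < n)%nat -> f m = g m) -> fsum n f = fsum n g.
Proof. induction n; intros H; [reflexivity|]. rewrite !fsum_S, IHn, H; auto. Qed.

Lemma fsum_le n f g : (forall m, (m < n)%nat -> f m <= g m) -> fsum n f <= fsum n g.
Proof.
  induction n; intros H; [unfold fsum; simpl; lra|]. rewrite !fsum_S.
  assert (fsum n f <= fsum n g) by (apply IHn; auto). specialize (H n (Nat.lt_succ_diag_r n)). lra.
Qed.

Lemma fsum_plus n f g : fsum n (fun m => f m + g m) = fsum n f + fsum n g.
Proof. induction n; [unfold fsum; simpl; lra|]. rewrite !fsum_S, IHn. lra. Qed.

Lemma fsum_scal n c f : fsum n (fun m => c * f m) = c * fsum n f.
Proof. induction n; [unfold fsum; simpl; lra|]. rewrite !fsum_S, IHn. lra. Qed.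

Lemma fsum_extract n a g : (a < n)%nat ->
  fsum n g = g a + fsum n (fun m => if Nat.eqb m a then 0 else g m).
Proof.
  induction n; intros H; [lia|]. rewrite !fsum_S.
  destruct (Nat.eq_dec a n) as [->|Han].
  - rewrite Nat.eqb_refl, (fsum_ext n (fun m => if Nat.eqb m n then 0 else g m) g); [lra|].
    intros m Hm. destruct (Nat.eqb_spec m n); [lia | auto].
  - rewrite IHn by lia. destruct (Nat.eqb_spec n a); [lia | lra].
Qed.

Lemma fsum_nonneg n f : (forall m, (m < n)%nat -> 0 <= f m) -> 0 <= fsum n f.
Proof.
  induction n; intros H; [unfold fsum; simpl; lra|]. rewrite fsum_S.
  assert (0 <= fsum n f) by (apply IHn; auto). specialize (H n (Nat.lt_succ_diag_r n)). lra.
Qed.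

Lemma fsum_pos n f a : (forall m, (m < n)%nat -> 0 <= f m) -> (a < n)%nat -> 0 < f a ->
  0 < fsum n f.
Proof.
  intros H Ha Hfa. rewrite (fsum_extract n a) by auto.
  assert (0 <= fsum n (fun m => if Nat.eqb m a then 0 else f m)); [|lra].
  apply fsum_nonneg. intros m Hm. destruct (Nat.eqb m a); [lra | auto].
Qed.

Lemma fsum_masked_lincomb n (b : nat -> bool) (c g : nat -> R) u v :
  fsum n (fun m => if b m then 0 else u * c m + v * (c m * g m)) =
  u * fsum n (fun m => if b m then 0 else c m)
  + v * fsum n (fun m => if b m then 0 else c m * g m).
Proof. rewrite <- !fsum_scal, <- fsum_plus. apply fsum_ext. intros m _. destruct (b m); ring. Qed.

Lemma list_min_pos (A : Type) (l : list A) (g : A -> R) :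
  (forall x, In x l -> 0 < g x) -> exists c, 0 < c /\ forall x, In x l -> c <= g x.
Proof.
  induction l as [|x l IH]; intros H.
  - exists 1. split; [lra | intros x []].
  - destruct IH as (c & Hc & Hc'); [intros y Hy; apply H; right; auto|].
    exists (Rmin (g x) c). split.
    + apply Rmin_pos; auto. apply H; left; auto.
    + intros y [<- | Hy]; [apply Rmin_l|]. eapply Rle_trans; [apply Rmin_r | auto].
Qed.

Section FirstPassageSeries.

Variables (X : Type) (ok : X -> Prop) (P : (X -> R) -> X -> R).
Hypothesis P_ext : forall h1 h2 x, ok x -> (forall y, ok y -> h1 y = h2 y) -> P h1 x = P h2 x.
Hypothesis P_mono :
  forall h1 h2 x, ok x -> (forall y, ok y -> h1 y <= h2 y) -> P h1 x <= P h2 x.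
Hypothesis P_plus : forall h1 h2 x, P (fun y => h1 y + h2 y) x = P h1 x + P h2 x.
Hypothesis P_scal : forall a h x, P (fun y => a * h y) x = a * P h x.

Variables (target : X -> bool) (hit : nat -> X -> R).
Hypothesis hit_0 : forall x, hit 0%nat x = if target x then 1 else 0.
Hypothesis hit_S : forall n x, hit (S n) x = if target x then 0 else P (hit n) x.

Variables (lam c : R) (V U : X -> R).
Hypothesis lam_ge0 : 0 <= lam.
Hypothesis c_gt0 : 0 < c.
Hypothesis V_ge0 : forall x, ok x -> 0 <= V x.
Hypothesis U_ge0 : forall x, ok x -> 0 <= U x.
Hypothesis V_target : forall x, ok x -> target x = true -> V x = 1.
Hypothesis V_harmonic : forall x, ok x -> target x = false -> lam * P V x = V x.
Hypothesis U_superharmonic :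
  forall x, ok x -> target x = false -> lam * P U x + c * V x <= U x.

Lemma P_zero x : ok x -> P (fun _ => 0) x = 0.
Proof.
  intros Hx. rewrite (P_ext _ (fun y => 0 * 0) x Hx) by (intros; ring).
  rewrite P_scal. ring.
Qed.

Lemma P_sum (h : nat -> X -> R) n x :
  P (fun y => sum_f_R0 (fun t => h t y) n) x = sum_f_R0 (fun t => P (h t) x) n.
Proof. induction n as [|n IH]; simpl; [reflexivity|]. rewrite P_plus, IH. reflexivity. Qed.

(* [remainder n x] is E_x[lam^n V(W_n); T > n], T the hitting time of the target. *)
Fixpoint remainder (n : nat) (x : X) : R :=
  if target x then 0 else
  match n with
  | O => V x
  | S n' => lam * P (remainder n') x
  end.

Lemma remainder_ge0 n x : ok x -> 0 <= remainder n x.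
Proof.
  revert x; induction n as [|n IH]; intros x Hx; simpl; destruct (target x); try lra.
  - auto.
  - apply Rmult_le_pos; [lra|]. rewrite <- (P_zero x Hx). apply P_mono; auto.
Qed.

Lemma remainder_le_V n x : ok x -> remainder n x <= V x.
Proof.
  revert x; induction n as [|n IH]; intros x Hx; simpl; destruct (target x) eqn:Ht;
    try (apply V_ge0; auto); try lra.
  rewrite <- (V_harmonic x Hx Ht). apply Rmult_le_compat_l; [lra|]. apply P_mono; auto.
Qed.

(* With r_n = remainder n: c (n+1) r_{n+1} = c r_{n+1} + lam P (c n r_n) <= c V + lam P U <= U. *)
Lemma remainder_decay n x : ok x -> c * INR n * remainder n x <= U x.
Proof.
  revert x; induction n as [|n IH]; intros x Hx.
  - simpl. rewrite Rmult_0_r, Rmult_0_l. auto.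
  - assert (Hrem := remainder_le_V (S n) x Hx). cbn [remainder] in *.
    destruct (target x) eqn:Ht; [rewrite Rmult_0_r; auto|].
    assert (HP : P (fun y => c * INR n * remainder n y) x <= P U x) by (apply P_mono; auto).
    rewrite P_scal in HP.
    assert (Hsup := U_superharmonic x Hx Ht).
    assert (c * (lam * P (remainder n) x) <= c * V x) by (apply Rmult_le_compat_l; lra).
    assert (lam * (c * INR n * P (remainder n) x) <= lam * P U x)
      by (apply Rmult_le_compat_l; lra).
    rewrite S_INR. nra.
Qed.

Lemma partial_sum_add_remainder n x : ok x ->
  sum_f_R0 (fun t => hit t x * lam ^ t) n + remainder n x = V x.
Proof.
  revert x; induction n as [|n IH]; intros x Hx.
  - simpl. rewrite hit_0. destruct (target x) eqn:Ht; [rewrite V_target by auto|]; ring.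
  - rewrite decomp_sum by lia. simpl pred. rewrite hit_0.
    cbn [remainder]. destruct (target x) eqn:Ht.
    + rewrite (sum_eq _ (fun _ => 0)) by (intros t _; rewrite hit_S, Ht; ring).
      rewrite sum_cte, V_target by auto. ring.
    + rewrite (sum_eq _ (fun t => P (fun y => lam ^ t * hit t y) x * lam)).
      2:{ intros t _. rewrite hit_S, Ht, P_scal. simpl. ring. }
      rewrite <- scal_sum, <- (P_sum (fun t y => lam ^ t * hit t y)), <- (V_harmonic x Hx Ht).
      rewrite (P_ext V (fun y => sum_f_R0 (fun t => lam ^ t * hit t y) n + remainder n y) x Hx).
      * rewrite P_plus. ring.
      * intros y Hy. rewrite <- (IH y Hy). f_equal. apply sum_eq. intros; ring.
Qed.

Lemma remainder_vanishes x : ok x -> is_lim_seq (fun n => remainder n x) 0.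
Proof.
  intros Hx.
  apply is_lim_seq_le_le_loc with (u := fun _ => 0) (w := fun n => U x / c * / INR n).
  - exists 1%nat. intros n Hn. split; [apply remainder_ge0; auto|].
    assert (0 < INR n) by (apply lt_0_INR; lia).
    assert (Hd := remainder_decay n x Hx).
    apply (Rmult_le_reg_l (c * INR n)); [apply Rmult_lt_0_compat; lra|].
    replace (c * INR n * (U x / c * / INR n)) with (U x) by (field; lra). lra.
  - apply is_lim_seq_const.
  - replace (Finite 0) with (Rbar_mult (U x / c) (Rbar_inv p_infty))
      by (simpl; f_equal; ring).
    apply is_lim_seq_scal_l, is_lim_seq_inv; [apply is_lim_seq_INR | discriminate].
Qed.

Theorem first_passage_series x : ok x -> is_series (fun n => hit n x * lam ^ n) (V x).
Proof.
  intros Hx.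
  assert (Hlim := is_lim_seq_minus' _ _ _ _ (is_lim_seq_const (V x)) (remainder_vanishes x Hx)).
  rewrite Rminus_0_r in Hlim.
  apply (is_lim_seq_ext _ (sum_n (fun n => hit n x * lam ^ n))) in Hlim; [exact Hlim|].
  intros n. rewrite sum_n_Reals, <- (partial_sum_add_remainder n x Hx). ring.
Qed.

End FirstPassageSeries.

(* The letter (k, a, b) stands for A_{a,b}^{(k)}; letter lists are read left to right. *)
Definition letter := (bool * nat * nat)%type.

Definition lmul (x : letter) (l : list letter) : list letter :=
  let '(kk, a, b) := x in
  match l with
  | [] => if Nat.eqb a b then [] else [(kk, a, b)]
  | (k2, c, d) :: l' =>
      if Bool.eqb kk k2 then (if Nat.eqb a d then l' else (kk, a, d) :: l')
      else (if Nat.eqb a b then l else (kk, a, b) :: l)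
  end.

(* The reduced word of w^{-1} A_{s,j}^{(k)}, w being a word with source s. *)
Fixpoint inv_mul_gen (s : nat) (k : bool) (j : nat) (w : word) : list letter :=
  match w with
  | [] => [(k, s, j)]
  | (k', j') :: w' => lmul (k', j', wend s w') (inv_mul_gen s k j w')
  end.

Fixpoint weight (g : nat -> nat -> bool -> R) (l : list letter) : R :=
  match l with
  | [] => 1
  | (kk, a, b) :: l' => g a b kk * weight g l'
  end.

Fixpoint reduced_from (N a : nat) (l : list letter) : Prop :=
  (a < N)%nat /\
  match l with
  | [] => True
  | (kk, c, d) :: l' => c = a /\ c <> d /\ reduced_from N d l' /\
      match l' with [] => True | (k2, _, _) :: _ => k2 <> kk end
  end.

Fixpoint reduced (N s : nat) (w : word) : Prop :=
  match w with
  | [] => True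
  | (k', j') :: w' => (j' < N)%nat /\ j' <> wend s w' /\ reduced N s w' /\
      match w' with [] => True | (k'', _) :: _ => k'' <> k' end
  end.

Lemma wend_lt N s w : (s < N)%nat -> reduced N s w -> (wend s w < N)%nat.
Proof. destruct w as [|[? ?] ?]; simpl; tauto. Qed.

Lemma reduced_wstep N s w kk m : reduced N s w -> (m < N)%nat -> m <> wend s w ->
  reduced N s (wstep s w kk m).
Proof.
  intros Hr Hm Hne. destruct w as [|[k' j'] w']; simpl in *; [auto|].
  destruct Hr as (H1 & H2 & H3 & H4).
  destruct (Bool.eqb_spec k' kk) as [->|]; [destruct (Nat.eqb_spec (wend s w') m)|];
    simpl; repeat split; auto.
Qed.

Lemma reduced_from_lt N a l : reduced_from N a l -> (a < N)%nat.
Proof. destruct l as [|[[? ?] ?] ?]; simpl; tauto. Qed.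

Lemma reduced_from_lmul N kk a b l : (a < N)%nat -> reduced_from N b l ->
  reduced_from N a (lmul (kk, a, b) l).
Proof.
  intros Ha Hl. destruct l as [|[[k2 c] d] l']; simpl in *.
  - destruct (Nat.eqb_spec a b); simpl; subst; intuition.
  - destruct Hl as (Hb & -> & Hcd & Hl' & Halt).
    destruct (Bool.eqb_spec kk k2) as [->|];
      [destruct (Nat.eqb_spec a d) as [->|] | destruct (Nat.eqb_spec a b) as [->|]];
      simpl; repeat split; auto.
Qed.

Lemma reduced_from_inv_mul_gen N s k j w : (s < N)%nat -> (j < N)%nat -> s <> j ->
  reduced N s w -> reduced_from N (wend s w) (inv_mul_gen s k j w).
Proof.
  intros Hs Hj Hsj. induction w as [|[k' j'] w' IH]; intros Hr; simpl.
  - repeat split; auto.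
  - destruct Hr as (H1 & H2 & H3 & H4). apply reduced_from_lmul; auto.
Qed.

Lemma lmul_merge N kk a c b l : reduced_from N b l ->
  lmul (kk, a, c) (lmul (kk, c, b) l) = lmul (kk, a, b) l.
Proof.
  intros Hl. destruct l as [|[[k2 c2] d] l']; simpl in *.
  - destruct (Nat.eqb_spec c b); simpl; [subst; reflexivity | rewrite eqb_reflx; reflexivity].
  - destruct Hl as (Hb & -> & Hcd & Hl' & Halt).
    destruct (Bool.eqb_spec kk k2) as [->|].
    + destruct (Nat.eqb_spec c d) as [->|]; simpl.
      * destruct l' as [|[[k3 c3] d3] l'']; simpl; [reflexivity|].
        destruct (Bool.eqb_spec k2 k3); [congruence | reflexivity].
      * rewrite eqb_reflx. reflexivity.
    + destruct (Nat.eqb_spec c b) as [->|]; simpl.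
      * destruct (Bool.eqb_spec kk k2); [congruence | reflexivity].
      * rewrite eqb_reflx. reflexivity.
Qed.

Lemma lmul_unit N kk a l : reduced_from N a l -> lmul (kk, a, a) l = l.
Proof.
  intros Hl. destruct l as [|[[k2 c2] d] l']; simpl in *; [rewrite Nat.eqb_refl; reflexivity|].
  destruct Hl as (Hb & -> & Hcd & Hl' & Halt).
  destruct (Bool.eqb_spec kk k2) as [->|]; [destruct (Nat.eqb_spec a d); [congruence|]|];
    rewrite ?Nat.eqb_refl; reflexivity.
Qed.

Lemma inv_mul_gen_wstep N s k j w kk m : (s < N)%nat -> (j < N)%nat -> s <> j ->
  reduced N s w -> m <> wend s w ->
  inv_mul_gen s k j (wstep s w kk m) = lmul (kk, m, wend s w) (inv_mul_gen s k j w).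
Proof.
  intros Hs Hj Hsj Hr Hm. destruct w as [|[k' j'] w']; cbn [wstep inv_mul_gen wend];
    [reflexivity|].
  destruct Hr as (H1 & H2 & H3 & H4).
  pose proof (reduced_from_inv_mul_gen N s k j w' Hs Hj Hsj H3) as Hl.
  destruct (Bool.eqb_spec k' kk) as [->|]; [|reflexivity].
  rewrite (lmul_merge N) by exact Hl.
  destruct (Nat.eqb_spec (wend s w') m) as [<-|]; [|reflexivity].
  rewrite (lmul_unit N) by exact Hl. reflexivity.
Qed.

Lemma inv_mul_gen_target s k j w : is_gen w k j = true -> inv_mul_gen s k j w = [].
Proof.
  destruct w as [|[k' j'] [|? ?]]; simpl; try discriminate.
  intros [H1 H2]%andb_true_iff. apply eqb_prop in H1. apply Nat.eqb_eq in H2. subst.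
  rewrite eqb_reflx, Nat.eqb_refl. reflexivity.
Qed.

Definition last_sign (k : bool) (w : word) : bool :=
  match w with [] => k | (k', _) :: _ => k' end.

Lemma inv_mul_gen_head N s k j w : reduced N s w -> s <> j -> is_gen w k j = false ->
  exists a rest, inv_mul_gen s k j w = (last_sign k w, wend s w, a) :: rest.
Proof.
  intros Hr Hsj. induction w as [|[k' j'] w' IH]; intros Hgen; simpl; [eauto|].
  destruct Hr as (H1 & H2 & H3 & H4).
  destruct w' as [|[k'' j''] w''].
  - simpl in *. destruct (Bool.eqb_spec k' k) as [->|].
    + destruct (Nat.eqb_spec j' j) as [->|]; [|eauto].
      rewrite eqb_reflx, Nat.eqb_refl in Hgen. discriminate.
    + destruct (Nat.eqb_spec j' s); [congruence | eauto].
  - destruct (is_gen ((k'', j'') :: w'') k j) eqn:Eg.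
    + destruct w''; [|discriminate]. simpl in Eg, H2.
      apply andb_true_iff in Eg as [E1 E2].
      apply eqb_prop in E1. apply Nat.eqb_eq in E2. subst.
      simpl. rewrite eqb_reflx, Nat.eqb_refl.
      destruct (Nat.eqb_spec j' j''); [congruence | eauto].
    + destruct (IH H3 eq_refl) as (a & rest & E). rewrite E. simpl in *.
      destruct (Bool.eqb_spec k' k''); [congruence|].
      destruct (Nat.eqb_spec j' j''); [congruence | eauto].
Qed.

Lemma weight_nonneg N g a l : reduced_from N a l ->
  (forall x y kk, (x < N)%nat -> (y < N)%nat -> x <> y -> 0 <= g x y kk) -> 0 <= weight g l.
Proof.
  revert a. induction l as [|[[kk c] d] l' IH]; intros a Hl H; simpl; [lra|].
  destruct Hl as (Ha & -> & Hcd & Hl' & _).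
  apply Rmult_le_pos; [apply H; eauto using reduced_from_lt | eapply IH; eauto].
Qed.

Lemma weight_inv_mul_gen_ge0 N g s k j w : (s < N)%nat -> (j < N)%nat -> s <> j ->
  (forall x y kk, (x < N)%nat -> (y < N)%nat -> x <> y -> 0 <= g x y kk) ->
  reduced N s w -> 0 <= weight g (inv_mul_gen s k j w).
Proof. intros. eapply weight_nonneg; eauto using reduced_from_inv_mul_gen. Qed.

Lemma weight_le N g1 g2 a l : reduced_from N a l ->
  (forall x y kk, (x < N)%nat -> (y < N)%nat -> x <> y -> 0 <= g1 x y kk <= g2 x y kk) ->
  weight g1 l <= weight g2 l.
Proof.
  revert a. induction l as [|[[kk c] d] l' IH]; intros a Hl H; simpl; [lra|].
  destruct Hl as (Ha & -> & Hcd & Hl' & _).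
  destruct (H a d kk Ha (reduced_from_lt N d l' Hl') Hcd).
  apply Rmult_le_compat; auto; [|eapply IH; eauto].
  apply (weight_nonneg N g1 d); auto. intros; apply H; auto.
Qed.

Lemma weight_lmul_cons g kk' kk m i a rest : m <> i ->
  weight g (lmul (kk', m, i) ((kk, i, a) :: rest)) =
  if Bool.eqb kk' kk then (if Nat.eqb m a then 1 else g m a kk) * weight g rest
  else g m i kk' * (g i a kk * weight g rest).
Proof.
  intros Hmi. cbn [lmul]. destruct (Bool.eqb_spec kk' kk) as [->|].
  - destruct (Bool.eqb_spec kk kk) as [_|]; [|congruence]. destruct (Nat.eqb m a); simpl; ring.
  - destruct (Nat.eqb_spec m i); [congruence | reflexivity].
Qed.

Definition fixpoint_rhs (N : nat) (p : nat -> nat -> bool -> R) (lam : R)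
    (g : nat -> nat -> bool -> R) (i a : nat) (kk : bool) : R :=
  lam * (p i a kk
         + fsum N (fun m => if Nat.eqb m i || Nat.eqb m a then 0 else p i m kk * g m a kk)
         + fsum N (fun m => if Nat.eqb m i then 0
                            else p i m (negb kk) * g m i (negb kk) * g i a kk)).

Lemma fixpoint_rhs_factor N p lam g i a kk :
  fixpoint_rhs N p lam g i a kk = lam * (p i a kk
    + fsum N (fun m => if Nat.eqb m i || Nat.eqb m a then 0 else p i m kk * g m a kk)
    + fsum N (fun m => if Nat.eqb m i then 0 else p i m (negb kk) * g m i (negb kk))
      * g i a kk).
Proof.
  unfold fixpoint_rhs. rewrite (Rmult_comm (fsum N _) (g i a kk)), <- fsum_scal.
  do 2 f_equal. apply fsum_ext. intros m _. destruct (Nat.eqb m i); ring.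
Qed.

Section TransitionOperator.

Variables (N : nat) (p : nat -> nat -> bool -> R) (s : nat).

Definition trans_op (h : word -> R) (w : word) : R :=
  fsum N (fun m => if Nat.eqb m (wend s w) then 0 else
     p (wend s w) m true * h (wstep s w true m) + p (wend s w) m false * h (wstep s w false m)).

Lemma trans_op_ext h1 h2 w : reduced N s w ->
  (forall x, reduced N s x -> h1 x = h2 x) -> trans_op h1 w = trans_op h2 w.
Proof.
  intros Hw H. apply fsum_ext. intros m Hm.
  destruct (Nat.eqb_spec m (wend s w)); [reflexivity|].
  rewrite !H by (apply reduced_wstep; auto). reflexivity.
Qed.

Lemma trans_op_mono h1 h2 w : (s < N)%nat -> reduced N s w ->
  (forall i m kk, (i < N)%nat -> (m < N)%nat -> i <> m -> 0 <= p i m kk) ->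
  (forall x, reduced N s x -> h1 x <= h2 x) -> trans_op h1 w <= trans_op h2 w.
Proof.
  intros Hs Hw Hp H. apply fsum_le. intros m Hm.
  destruct (Nat.eqb_spec m (wend s w)); [lra|].
  pose proof (wend_lt N s w Hs Hw).
  apply Rplus_le_compat; apply Rmult_le_compat_l;
    auto using reduced_wstep.
Qed.

Lemma trans_op_plus h1 h2 w :
  trans_op (fun x => h1 x + h2 x) w = trans_op h1 w + trans_op h2 w.
Proof.
  unfold trans_op. rewrite <- fsum_plus. apply fsum_ext. intros m _.
  destruct (Nat.eqb m (wend s w)); ring.
Qed.

Lemma trans_op_scal c h w : trans_op (fun x => c * h x) w = c * trans_op h w.
Proof.
  unfold trans_op. rewrite <- fsum_scal. apply fsum_ext. intros m _.
  destruct (Nat.eqb m (wend s w)); ring.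
Qed.

Variables (k : bool) (j : nat).
Hypotheses (s_lt : (s < N)%nat) (j_lt : (j < N)%nat) (s_neq_j : s <> j).

(* One step of the walk left-multiplies w^{-1} A_{s,j}^{(k)} by a generator, so a
   product weight transforms into the right-hand side of the fixed-point equation
   evaluated at the first letter. *)
Lemma trans_op_weight lam g w kk a rest : reduced N s w ->
  inv_mul_gen s k j w = (kk, wend s w, a) :: rest ->
  lam * trans_op (fun x => weight g (inv_mul_gen s k j x)) w =
  weight g rest * fixpoint_rhs N p lam g (wend s w) a kk.
Proof.
  intros Hw E.
  pose proof (reduced_from_inv_mul_gen N s k j w s_lt j_lt s_neq_j Hw) as Hl.
  rewrite E in Hl. destruct Hl as (Hi & _ & Hia & Hl' & _).
  assert (Ha := reduced_from_lt N a rest Hl').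
  set (i := wend s w) in *. set (W := weight g rest).
  unfold trans_op. fold i.
  rewrite (fsum_ext N _ (fun m =>
     (if Nat.eqb m i then 0 else p i m kk * ((if Nat.eqb m a then 1 else g m a kk) * W))
   + (if Nat.eqb m i then 0 else p i m (negb kk) * (g m i (negb kk) * (g i a kk * W))))).
  2:{ intros m Hm. destruct (Nat.eqb_spec m i) as [->|Hmi]; [lra|].
      rewrite !(inv_mul_gen_wstep N), E, !weight_lmul_cons by auto.
      fold W. destruct kk; simpl; ring. }
  rewrite fsum_plus, (fsum_extract N a (fun m => if Nat.eqb m i then 0 else _)) by exact Ha.
  destruct (Nat.eqb_spec a i) as [|_]; [congruence|]. rewrite Nat.eqb_refl.
  rewrite (fsum_ext N (fun m => if Nat.eqb m a then 0 else _)
     (fun m => W * (if Nat.eqb m i || Nat.eqb m a then 0 else p i m kk * g m a kk))).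
  2:{ intros m _. destruct (Nat.eqb m a), (Nat.eqb m i); simpl; ring. }
  rewrite (fsum_ext N (fun m => if Nat.eqb m i then 0 else p i m (negb kk) * _)
     (fun m => W * (if Nat.eqb m i then 0 else p i m (negb kk) * g m i (negb kk) * g i a kk))).
  2:{ intros m _. destruct (Nat.eqb m i); ring. }
  rewrite !fsum_scal. unfold fixpoint_rhs. ring.
Qed.

End TransitionOperator.

Definition avg1 (q : nat -> nat -> bool -> R) (x y : nat) (b : bool) : R := (1 + q x y b) / 2.

Section FixedPoint.

Variables (N : nat) (p q : nat -> nat -> bool -> R) (lam : R).
Hypotheses (N_gt1 : (1 < N)%nat) (p_trans : transition_probs N p) (lam_bounds : 0 <= lam <= 1).
Hypothesis q_bounds :
  forall i a kk, (i < N)%nat -> (a < N)%nat -> i <> a -> 0 < q i a kk < 1.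
Hypothesis q_fixed : forall i a kk, (i < N)%nat -> (a < N)%nat -> i <> a ->
  q i a kk = fixpoint_rhs N p lam q i a kk.

Lemma p_ge0 i m kk : (i < N)%nat -> (m < N)%nat -> i <> m -> 0 <= p i m kk.
Proof. intros. destruct p_trans as [Hp _]. destruct (Hp i m kk); auto; lra. Qed.

Lemma q_ge0 i a kk : (i < N)%nat -> (a < N)%nat -> i <> a -> 0 <= q i a kk.
Proof. intros. destruct (q_bounds i a kk); auto; lra. Qed.

Lemma avg1_ge0 i a kk : (i < N)%nat -> (a < N)%nat -> i <> a -> 0 <= avg1 q i a kk.
Proof. intros. unfold avg1. destruct (q_bounds i a kk); auto; lra. Qed.

Lemma transition_row_split i a kk : (i < N)%nat -> (a < N)%nat -> i <> a ->
  p i a kk + fsum N (fun m => if Nat.eqb m i || Nat.eqb m a then 0 else p i m kk)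
  + fsum N (fun m => if Nat.eqb m i then 0 else p i m (negb kk)) = 1.
Proof.
  intros Hi Ha Hia. destruct p_trans as [_ Hrow]. rewrite <- (Hrow i Hi).
  rewrite (fsum_ext N (fun m => if Nat.eqb m i then 0 else p i m true + p i m false)
                      (fun m => (if Nat.eqb m i then 0 else p i m kk)
                              + (if Nat.eqb m i then 0 else p i m (negb kk)))).
  2:{ intros m _. destruct (Nat.eqb m i), kk; simpl; ring. }
  rewrite fsum_plus, (fsum_extract N a (fun m => if Nat.eqb m i then 0 else p i m kk)) by auto.
  destruct (Nat.eqb_spec a i); [congruence|].
  rewrite (fsum_ext N (fun m => if Nat.eqb m a then 0 else _)
                      (fun m => if Nat.eqb m i || Nat.eqb m a then 0 else p i m kk)); [ring|].
  intros m _. destruct (Nat.eqb m a), (Nat.eqb m i); reflexivity.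
Qed.

Lemma escape_mass_pos i kk : (i < N)%nat ->
  0 < fsum N (fun m => if Nat.eqb m i then 0 else p i m kk * (1 - q m i kk)).
Proof.
  intros Hi. set (m0 := if Nat.eqb i 0 then 1%nat else 0%nat).
  assert (Hm0 : (m0 < N)%nat /\ m0 <> i) by (unfold m0; destruct (Nat.eqb_spec i 0); lia).
  destruct Hm0 as [Hm0 Hm0i].
  apply (fsum_pos N _ m0); auto.
  - intros m Hm. destruct (Nat.eqb_spec m i); [lra|].
    apply Rmult_le_pos; [apply p_ge0; auto|]. destruct (q_bounds m i kk); auto; lra.
  - destruct (Nat.eqb_spec m0 i); [congruence|].
    destruct p_trans as [Hp _]. destruct (Hp i m0 kk), (q_bounds m0 i kk); auto.
    apply Rmult_lt_0_compat; lra.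
Qed.

Lemma avg1_defect i a kk : (i < N)%nat -> (a < N)%nat -> i <> a ->
  avg1 q i a kk - fixpoint_rhs N p lam (avg1 q) i a kk =
  (1 - lam) / 2
  + lam / 4 * fsum N (fun m => if Nat.eqb m i then 0
                               else p i m (negb kk) * (1 - q m i (negb kk)))
    * (1 - q i a kk).
Proof.
  intros Hi Ha Hia.
  set (A := fsum N (fun m => if Nat.eqb m i || Nat.eqb m a then 0 else p i m kk)).
  set (Aq := fsum N (fun m => if Nat.eqb m i || Nat.eqb m a then 0 else p i m kk * q m a kk)).
  set (B := fsum N (fun m => if Nat.eqb m i then 0 else p i m (negb kk))).
  set (Bq := fsum N (fun m => if Nat.eqb m i then 0 else p i m (negb kk) * q m i (negb kk))).
  assert (Hq : q i a kk - lam * (p i a kk + Aq + Bq * q i a kk) = 0)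
    by (unfold Aq, Bq; rewrite <- fixpoint_rhs_factor, <- q_fixed by auto; ring).
  assert (Hrow : 1 - (p i a kk + A + B) = 0)
    by (unfold A, B; rewrite transition_row_split by auto; ring).
  rewrite fixpoint_rhs_factor.
  rewrite (fsum_ext N (fun m => if Nat.eqb m i || Nat.eqb m a then 0 else _)
    (fun m => if Nat.eqb m i || Nat.eqb m a then 0
              else / 2 * p i m kk + / 2 * (p i m kk * q m a kk)))
    by (intros m _; unfold avg1; destruct (_ || _); field).
  rewrite (fsum_ext N (fun m => if Nat.eqb m i then 0 else p i m (negb kk) * avg1 q m i _)
    (fun m => if Nat.eqb m i then 0
              else / 2 * p i m (negb kk) + / 2 * (p i m (negb kk) * q m i (negb kk))))
    by (intros m _; unfold avg1; destruct (Nat.eqb m i); field).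
  rewrite (fsum_ext N (fun m => if Nat.eqb m i then 0 else p i m (negb kk) * (1 - _))
    (fun m => if Nat.eqb m i then 0
              else 1 * p i m (negb kk) + -1 * (p i m (negb kk) * q m i (negb kk))))
    by (intros m _; destruct (Nat.eqb m i); ring).
  rewrite !fsum_masked_lincomb. fold A Aq B Bq. unfold avg1.
  apply Rminus_diag_uniq.
  transitivity ((q i a kk - lam * (p i a kk + Aq + Bq * q i a kk)) / 2
                + lam / 2 * (1 - (p i a kk + A + B))); [field|].
  rewrite Hq, Hrow. field.
Qed.

Lemma avg1_defect_pos i a kk : (i < N)%nat -> (a < N)%nat -> i <> a ->
  0 < avg1 q i a kk - fixpoint_rhs N p lam (avg1 q) i a kk.
Proof.
  intros Hi Ha Hia. rewrite avg1_defect by auto.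
  assert (Hesc := escape_mass_pos i (negb kk) Hi).
  destruct (q_bounds i a kk Hi Ha Hia).
  assert (0 < fsum N (fun m => if Nat.eqb m i then 0
                               else p i m (negb kk) * (1 - q m i (negb kk))) * (1 - q i a kk))
    by (apply Rmult_lt_0_compat; lra).
  destruct (Rle_lt_or_eq _ _ (proj2 lam_bounds)) as [Hlt | ->]; [|lra].
  assert (0 <= lam / 4 * fsum N (fun m => if Nat.eqb m i then 0
                               else p i m (negb kk) * (1 - q m i (negb kk))) * (1 - q i a kk));
    [|lra].
  rewrite Rmult_assoc. apply Rmult_le_pos; lra.
Qed.

Lemma avg1_defect_lower_bound : exists c, 0 < c /\
  forall i a kk, (i < N)%nat -> (a < N)%nat -> i <> a ->
    c <= avg1 q i a kk - fixpoint_rhs N p lam (avg1 q) i a kk.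
Proof.
  set (defect := fun '(i, a, kk) => if Nat.eqb i a then 1
                   else avg1 q i a kk - fixpoint_rhs N p lam (avg1 q) i a kk).
  set (indices := list_prod (list_prod (seq 0 N) (seq 0 N)) [true; false]).
  destruct (list_min_pos _ indices defect) as (c & Hc & Hmin).
  - intros [[i a] kk] Hin. apply in_prod_iff in Hin as [[Hi Ha]%in_prod_iff _].
    apply in_seq in Hi, Ha. simpl.
    destruct (Nat.eqb_spec i a); [lra | apply avg1_defect_pos; lia].
  - exists c. split; [exact Hc|]. intros i a kk Hi Ha Hia.
    specialize (Hmin (i, a, kk)). simpl in Hmin.
    destruct (Nat.eqb_spec i a); [congruence|]. apply Hmin.
    apply in_prod_iff. split; [apply in_prod_iff; split; apply in_seq; lia|].
    destruct kk; simpl; auto.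
Qed.

Variables (s : nat) (k : bool) (j : nat).
Hypotheses (s_lt : (s < N)%nat) (j_lt : (j < N)%nat) (s_neq_j : s <> j).

Lemma weight_fixed_harmonic w : reduced N s w -> is_gen w k j = false ->
  lam * trans_op N p s (fun x => weight q (inv_mul_gen s k j x)) w =
  weight q (inv_mul_gen s k j w).
Proof.
  intros Hw Hgen. destruct (inv_mul_gen_head N s k j w Hw s_neq_j Hgen) as (a & rest & E).
  rewrite (trans_op_weight N p s k j s_lt j_lt s_neq_j lam q w _ a rest Hw E), E.
  pose proof (reduced_from_inv_mul_gen N s k j w s_lt j_lt s_neq_j Hw) as Hl.
  rewrite E in Hl. destruct Hl as (Hi & _ & Hia & Hl' & _).
  simpl. rewrite <- q_fixed by eauto using reduced_from_lt. ring.
Qed.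

Lemma weight_avg1_superharmonic c w : 0 <= c ->
  (forall i a kk, (i < N)%nat -> (a < N)%nat -> i <> a ->
    c <= avg1 q i a kk - fixpoint_rhs N p lam (avg1 q) i a kk) ->
  reduced N s w -> is_gen w k j = false ->
  lam * trans_op N p s (fun x => weight (avg1 q) (inv_mul_gen s k j x)) w
  + c * weight q (inv_mul_gen s k j w) <= weight (avg1 q) (inv_mul_gen s k j w).
Proof.
  intros Hc Hdefect Hw Hgen.
  destruct (inv_mul_gen_head N s k j w Hw s_neq_j Hgen) as (a & rest & E).
  rewrite (trans_op_weight N p s k j s_lt j_lt s_neq_j lam _ w _ a rest Hw E), E.
  pose proof (reduced_from_inv_mul_gen N s k j w s_lt j_lt s_neq_j Hw) as Hl.
  rewrite E in Hl. destruct Hl as (Hi & _ & Hia & Hl' & _).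
  assert (Ha := reduced_from_lt N a rest Hl').
  set (i := wend s w) in *. set (kk := last_sign k w) in *. simpl.
  assert (Hrest_ge0 : 0 <= weight q rest) by (apply (weight_nonneg N q a); auto using q_ge0).
  assert (Hrest_le : weight q rest <= weight (avg1 q) rest).
  { apply (weight_le N q (avg1 q) a); auto. intros x y b Hx Hy Hxy.
    unfold avg1. destruct (q_bounds x y b); auto; lra. }
  assert (Hd := Hdefect i a kk Hi Ha Hia).
  destruct (q_bounds i a kk Hi Ha Hia).
  assert (c * (q i a kk * weight q rest) <= c * weight (avg1 q) rest).
  { apply Rmult_le_compat_l; [lra|].
    apply Rle_trans with (1 * weight q rest); [apply Rmult_le_compat_r; lra | lra]. }
  assert (weight (avg1 q) rest * (fixpoint_rhs N p lam (avg1 q) i a kk + c) <=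
          weight (avg1 q) rest * avg1 q i a kk) by (apply Rmult_le_compat_l; lra).
  lra.
Qed.

End FixedPoint.

Theorem proposition5p6 (N : nat) (p : nat -> nat -> bool -> R)
  (q : nat -> nat -> bool -> R) (lam : R) :
  (3 <= N)%nat ->
  transition_probs N p ->
  0 <= lam <= 1 ->
  (forall i j k, (i < N)%nat -> (j < N)%nat -> i <> j -> 0 < q i j k < 1) ->
  (forall i j k, (i < N)%nat -> (j < N)%nat -> i <> j ->
     q i j k =
       lam * (p i j k
              + fsum N (fun m => if Nat.eqb m i || Nat.eqb m j then 0
                                 else p i m k * q m j k)
              + fsum N (fun m => if Nat.eqb m i then 0
                                 else p i m (negb k) * q m i (negb k) * q i j k))) ->
  forall i j k, (i < N)%nat -> (j < N)%nat -> i <> j ->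
    R_gen_is N p i j k lam (q i j k).
Proof.
  intros HN Hp Hlam Hq Hfix s j k Hs Hj Hsj.
  assert (N_gt1 : (1 < N)%nat) by lia.
  assert (Hp_ge0 := p_ge0 N p Hp).
  destruct (avg1_defect_lower_bound N p q lam N_gt1 Hp Hlam Hq Hfix) as (c & Hc & Hdefect).
  unfold R_gen_is, hitting_prob.
  replace (q s j k) with (weight q (inv_mul_gen s k j [])) by (simpl; ring).
  apply first_passage_series with (ok := reduced N s) (P := trans_op N p s)
    (target := fun w => is_gen w k j) (hit := fun n w => hitP N p s k j n w) (c := c)
    (V := fun w => weight q (inv_mul_gen s k j w))
    (U := fun w => weight (avg1 q) (inv_mul_gen s k j w)) (x := []).
  - intros; apply trans_op_ext; auto.
  - intros; apply trans_op_mono; auto.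
  - intros; apply trans_op_plus.
  - intros; apply trans_op_scal.
  - reflexivity.
  - reflexivity.
  - lra.
  - exact Hc.
  - intros w Hw. apply (weight_inv_mul_gen_ge0 N); auto. intros; apply (q_ge0 N q); auto.
  - intros w Hw. apply (weight_inv_mul_gen_ge0 N); auto. intros; apply (avg1_ge0 N q); auto.
  - intros w _ Hgen. rewrite inv_mul_gen_target by auto. reflexivity.
  - intros w Hw Hgen. apply weight_fixed_harmonic; auto.
  - intros w Hw Hgen. apply weight_avg1_superharmonic; auto; lra.
  - exact I.
Qed.
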